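(* Let $S$ be an inverse semigroup that is a mirror semigroup, with semilattice of idempotents $\Sigma$. Then $S$ is stably continuous if and only if $\Sigma$ is stably continuous.
   Context: An inverse semigroup is a semigroup $S$ in which every $s$ has a unique $s^*$ with $ss^*s=s$ and $s^*ss^*=s^*$. $\Sigma=\Sigma(S)$ is the set of idempotents (itself an inverse semigroup, a semilattice). The intrinsic order is $s\leqslant t$ iff $s=t\epsilon$ for some idempotent $\epsilon$. A subset is directed if nonempty and any two elements have an upper bound in it. $S$ is a mirror semigroup if every directed subset of $\Sigma$ having a supremum in $(\Sigma,\leqslant)$ also has a supremum in $(S,\leqslant)$. In a poset, $x$ is way-below $y$ ($x\ll y$) if for every directed subset $D$ that has a supremum with $y\leqslant \sup D$, there is $d\in D$ with $x\leqslant d$. A poset is continuous if for every $s$ the set $\{t : t\ll s\}$ is directed with supremum $s$. An inverse semigroup $T$ is stably continuous if $(T,\leqslant)$ is continuous and its way-below relation $\ll$ is multiplicative, i.e. $s\ll t$ and $s'\ll t'$ imply $ss'\ll tt'$. For $\Sigma$ these notions are taken with respect to the poset $(\Sigma,\leqslant)$ and its own way-below relation. *)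

Section Defs.
Context {S : Type} (mul : S -> S -> S).

Definition inverse_semigroup : Prop :=
  (forall x y z, mul x (mul y z) = mul (mul x y) z) /\
  (forall s, exists! t, mul (mul s t) s = s /\ mul (mul t s) t = t).

Definition idem (e : S) : Prop := mul e e = e.

Definition ileq (s t : S) : Prop := exists e, idem e /\ s = mul t e.

(* Order-theoretic notions for the poset (C, ileq) where C is a carrier
   subset (C = everything for S, C = idem for Sigma with restricted order). *)
Definition directed (C : S -> Prop) (D : S -> Prop) : Prop :=
  (forall d, D d -> C d) /\ (exists d, D d) /\
  (forall x y, D x -> D y -> exists z, D z /\ ileq x z /\ ileq y z).

Definition is_sup (C : S -> Prop) (D : S -> Prop) (s : S) : Prop :=
  C s /\ (forall d, D d -> ileq d s) /\
  (forall u, C u -> (forall d, D d -> ileq d u) -> ileq s u).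

Definition way_below (C : S -> Prop) (x y : S) : Prop :=
  forall D s, directed C D -> is_sup C D s -> ileq y s ->
    exists d, D d /\ ileq x d.

Definition continuous (C : S -> Prop) : Prop :=
  forall s, C s ->
    directed C (fun t => C t /\ way_below C t s) /\
    is_sup C (fun t => C t /\ way_below C t s) s.

Definition wb_multiplicative (C : S -> Prop) : Prop :=
  forall s t s' t', C s -> C t -> C s' -> C t' ->
    way_below C s t -> way_below C s' t' ->
    way_below C (mul s s') (mul t t').

Definition stably_continuous (C : S -> Prop) : Prop :=
  continuous C /\ wb_multiplicative C.

Definition allS (_ : S) : Prop := True.

Definition mirror : Prop :=
  forall D, directed idem D -> (exists s, is_sup idem D s) ->
    exists s, is_sup allS D s.

End Defs.

(* The whole argument rests on one characterisation: when Σ is stably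
   continuous and S is a mirror semigroup, t ≪ s holds in S iff t ≤ s and
   t*t ≪ s*s holds in Σ.  Its two ingredients are that a directed family of
   idempotents has the same supremum in Σ and in S (mirror property), and
   that left translation by any s maps such a supremum u to the supremum s u
   of the translated family.  The approximants of s are then the s x with
   x ≪ s*s, and multiplicativity of ≪ in S reduces to Σ through the identity
   (st)*(st) = t* (s*s) t, using that conjugation by r preserves ≪ below rr*.
   Conversely, for idempotents the way-below relations of S and Σ coincide,
   which gives the direction from S to Σ. *)

From Stdlib Require Import IndefiniteDescription.

Section InverseSemigroup.
Context {S : Type} (mul : S -> S -> S) (HS : inverse_semigroup mul).
Local Infix "∙" := mul (at level 40, left associativity).
Local Infix "≼" := (ileq mul) (at level 70).
Local Notation Sigma := (idem mul).

Lemma mulA x y z : x ∙ (y ∙ z) = x ∙ y ∙ z.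
Proof. apply (proj1 HS). Qed.

Ltac reassoc := repeat rewrite mulA.

Definition is_inverse s t := s ∙ t ∙ s = s /\ t ∙ s ∙ t = t.

Lemma inverse_exists s : exists t, is_inverse s t.
Proof. destruct (proj2 HS s) as [t [Ht _]]. exists t. exact Ht. Qed.

Lemma inverse_unique s t1 t2 : is_inverse s t1 -> is_inverse s t2 -> t1 = t2.
Proof.
  intros H1 H2. destruct (proj2 HS s) as [t [_ U]].
  rewrite <- (U t1 H1), <- (U t2 H2). reflexivity.
Qed.

Definition star (s : S) : S :=
  proj1_sig (constructive_indefinite_description _ (inverse_exists s)).

Local Notation dom s := (star s ∙ s).
Local Notation ran s := (s ∙ star s).

Lemma star_inverse s : is_inverse s (star s).
Proof. unfold star. destruct (constructive_indefinite_description _ _). assumption. Qed.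

Lemma ran_mul s : ran s ∙ s = s.
Proof. apply star_inverse. Qed.

Lemma dom_mul_star s : dom s ∙ star s = star s.
Proof. apply star_inverse. Qed.

Lemma mul_ran_mul a s : a ∙ s ∙ star s ∙ s = a ∙ s.
Proof. rewrite <- !mulA, (mulA s), ran_mul. reflexivity. Qed.

Lemma mul_dom_mul_star a s : a ∙ star s ∙ s ∙ star s = a ∙ star s.
Proof. rewrite <- !mulA, (mulA (star s)), dom_mul_star. reflexivity. Qed.

Lemma mul_idem_idem a e : Sigma e -> a ∙ e ∙ e = a ∙ e.
Proof. intro He. rewrite <- mulA, He. reflexivity. Qed.

Lemma idem_inverse e : Sigma e -> is_inverse e e.
Proof. intro He. unfold is_inverse. rewrite He, He. split; reflexivity. Qed.

(* The inverse x of ef satisfies x = f x e by uniqueness, which makes x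
   idempotent; then ef, being the inverse of the idempotent x, equals x. *)
Lemma idem_mul e f : Sigma e -> Sigma f -> Sigma (e ∙ f).
Proof.
  intros He Hf. unfold idem in *.
  set (x := star (e ∙ f)).
  assert (Hx : is_inverse (e ∙ f) x) by apply star_inverse.
  assert (Hfxe : is_inverse (e ∙ f) (f ∙ x ∙ e)).
  { destruct Hx as [H1 H2]. split.
    - transitivity (e ∙ f ∙ x ∙ (e ∙ f)); [|exact H1].
      reassoc. rewrite <- (mulA e f f), Hf, <- (mulA _ e e), He. reflexivity.
    - transitivity (f ∙ (x ∙ (e ∙ f) ∙ x) ∙ e); [|rewrite H2; reflexivity].
      reassoc. rewrite <- (mulA _ e e), He, <- (mulA _ f f), Hf. reflexivity. }
  assert (Ex : x = f ∙ x ∙ e) by exact (inverse_unique _ _ _ Hx Hfxe).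
  assert (Ix : Sigma x).
  { unfold idem. transitivity (f ∙ (x ∙ (e ∙ f) ∙ x) ∙ e).
    - rewrite Ex at 1 2. reassoc. reflexivity.
    - rewrite (proj2 Hx). symmetry. exact Ex. }
  assert (Eef : e ∙ f = x).
  { apply (inverse_unique x).
    - split; [exact (proj2 Hx) | exact (proj1 Hx)].
    - apply idem_inverse, Ix. }
  rewrite Eef. exact Ix.
Qed.

Lemma idem_comm e f : Sigma e -> Sigma f -> e ∙ f = f ∙ e.
Proof.
  intros He Hf.
  pose proof (idem_mul e f He Hf) as Ief. pose proof (idem_mul f e Hf He) as Ife.
  unfold idem in *.
  apply (inverse_unique (e ∙ f)); [apply idem_inverse, Ief|split].
  - reassoc. rewrite <- (mulA e f f), Hf, <- (mulA _ e e), He, <- mulA. exact Ief.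
  - reassoc. rewrite <- (mulA f e e), He, <- (mulA _ f f), Hf, <- mulA. exact Ife.
Qed.

Lemma mul_idem_comm a e f : Sigma e -> Sigma f -> a ∙ e ∙ f = a ∙ f ∙ e.
Proof. intros He Hf. rewrite <- !mulA, (idem_comm e f He Hf). reflexivity. Qed.

Lemma star_idem e : Sigma e -> star e = e.
Proof. intro He. apply (inverse_unique e); [apply star_inverse|apply idem_inverse, He]. Qed.

Lemma starK s : star (star s) = s.
Proof.
  apply (inverse_unique (star s)); [apply star_inverse|].
  split; [apply dom_mul_star|apply ran_mul].
Qed.

Lemma idem_ran s : Sigma (ran s).
Proof. unfold idem. rewrite mulA, ran_mul. reflexivity. Qed.

Lemma idem_dom s : Sigma (dom s).
Proof. unfold idem. rewrite mulA, dom_mul_star. reflexivity. Qed.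

Lemma dom_idem e : Sigma e -> dom e = e.
Proof. intro He. rewrite star_idem by exact He. exact He. Qed.

Lemma star_mul s t : star (s ∙ t) = star t ∙ star s.
Proof.
  apply (inverse_unique (s ∙ t)); [apply star_inverse|split].
  - transitivity (s ∙ ran t ∙ dom s ∙ t); [reassoc; reflexivity|].
    rewrite <- (mulA s), (idem_comm _ _ (idem_ran t) (idem_dom s)).
    reassoc. rewrite ran_mul, mul_ran_mul. reflexivity.
  - transitivity (star t ∙ dom s ∙ ran t ∙ star s); [reassoc; reflexivity|].
    rewrite <- (mulA (star t)), (idem_comm _ _ (idem_dom s) (idem_ran t)).
    reassoc. rewrite dom_mul_star, mul_dom_mul_star. reflexivity.
Qed.

Lemma dom_mul s t : dom (s ∙ t) = star t ∙ dom s ∙ t.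
Proof. rewrite star_mul. reassoc. reflexivity. Qed.

Lemma idem_conj x f : Sigma f -> Sigma (star x ∙ f ∙ x).
Proof.
  intro Hf. unfold idem.
  transitivity (star x ∙ f ∙ ran x ∙ f ∙ x); [reassoc; reflexivity|].
  rewrite (mul_idem_comm _ _ _ Hf (idem_ran x)).
  reassoc. rewrite dom_mul_star, mul_idem_idem by exact Hf. reflexivity.
Qed.

Lemma idem_conj_star x f : Sigma f -> Sigma (x ∙ f ∙ star x).
Proof. intro Hf. pose proof (idem_conj (star x) f Hf) as P. rewrite starK in P. exact P. Qed.

Lemma idem_mul_conj f x : Sigma f -> f ∙ x = x ∙ (star x ∙ f ∙ x).
Proof.
  intro Hf. transitivity (f ∙ ran x ∙ x); [reassoc; rewrite mul_ran_mul; reflexivity|].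
  rewrite (idem_comm _ _ Hf (idem_ran x)). reassoc. reflexivity.
Qed.

Lemma ileq_domE s t : s ≼ t <-> s = t ∙ dom s.
Proof.
  split.
  - intros [e [He ->]]. rewrite star_mul, star_idem by exact He.
    transitivity (t ∙ (dom t ∙ e) ∙ e).
    + reassoc. rewrite ran_mul, mul_idem_idem by exact He. reflexivity.
    + rewrite <- (idem_comm _ _ He (idem_dom t)). reassoc. reflexivity.
  - intro E. exists (dom s). split; [apply idem_dom|exact E].
Qed.

Lemma idem_ileqE e s : Sigma e -> (e ≼ s <-> e = s ∙ e).
Proof.
  intro He. rewrite ileq_domE, dom_idem by exact He. reflexivity.
Qed.

Lemma ileq_refl s : s ≼ s.
Proof. apply ileq_domE. rewrite mulA, ran_mul. reflexivity. Qed.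

Lemma ileq_trans s t u : s ≼ t -> t ≼ u -> s ≼ u.
Proof.
  intros [e [He ->]] [f [Hf ->]]. exists (f ∙ e).
  split; [apply idem_mul; assumption|symmetry; apply mulA].
Qed.

Lemma ileq_mul_idem s e : Sigma e -> s ∙ e ≼ s.
Proof. intro He. exists e. split; [exact He|reflexivity]. Qed.

Lemma idem_mul_ileq f x : Sigma f -> f ∙ x ≼ x.
Proof.
  intro Hf. exists (star x ∙ f ∙ x).
  split; [apply idem_conj, Hf|apply idem_mul_conj, Hf].
Qed.

Lemma ileq_mull u s t : s ≼ t -> u ∙ s ≼ u ∙ t.
Proof. intros [e [He ->]]. exists e. split; [exact He|apply mulA]. Qed.

Lemma ileq_mulr u s t : s ≼ t -> s ∙ u ≼ t ∙ u.
Proof. intros [e [He ->]]. rewrite <- mulA. apply ileq_mull, idem_mul_ileq, He. Qed.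

Lemma ileq_mul s t s' t' : s ≼ t -> s' ≼ t' -> s ∙ s' ≼ t ∙ t'.
Proof. intros H1 H2. apply ileq_trans with (t ∙ s'); [apply ileq_mulr|apply ileq_mull]; assumption. Qed.

Lemma ileq_conj r x y : x ≼ y -> r ∙ x ∙ star r ≼ r ∙ y ∙ star r.
Proof. intro Hxy. apply ileq_mulr, ileq_mull, Hxy. Qed.

Lemma ileq_star s t : s ≼ t -> star s ≼ star t.
Proof. intros [e [He ->]]. rewrite star_mul, star_idem by exact He. apply idem_mul_ileq, He. Qed.

Lemma ileq_dom s t : s ≼ t -> dom s ≼ dom t.
Proof. intro H1. apply ileq_mul; [apply ileq_star|]; exact H1. Qed.

Lemma idem_ileq s e : Sigma e -> s ≼ e -> Sigma s.
Proof. intros He [f [Hf ->]]. apply idem_mul; assumption. Qed.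

Lemma idem_mul_ileq_r e f : Sigma e -> Sigma f -> e ∙ f ≼ f.
Proof. intros He Hf. rewrite (idem_comm _ _ He Hf). apply ileq_mul_idem, He. Qed.

Lemma ileq_mul_of_dom t s e : Sigma e -> t ≼ s -> dom t ≼ e -> t ≼ s ∙ e.
Proof.
  intros He Hts Hte. apply ileq_domE in Hts. apply idem_ileqE in Hte; [|apply idem_dom].
  exists (dom t). split; [apply idem_dom|].
  rewrite Hts at 1. rewrite Hte at 1. reassoc. reflexivity.
Qed.

Lemma ileq_of_dom t d a : t ≼ a -> d ≼ a -> dom t ≼ dom d -> t ≼ d.
Proof.
  intros Hta Hda Htd. apply ileq_domE in Hda. rewrite Hda.
  apply ileq_mul_of_dom; [apply idem_dom|exact Hta|exact Htd].
Qed.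

Lemma dom_mul_idem s x : Sigma x -> x ≼ dom s -> dom (s ∙ x) = x.
Proof.
  intros Ix Hx. apply idem_ileqE in Hx; [|exact Ix].
  rewrite dom_mul, star_idem by exact Ix.
  transitivity (x ∙ (dom s ∙ x)); [reassoc; reflexivity|].
  rewrite <- Hx. exact Ix.
Qed.

Definition img (D : S -> Prop) (g : S -> S) : S -> Prop :=
  fun y => exists x, D x /\ y = g x.

Lemma img_in D g x : D x -> img D g (g x).
Proof. intro Hx. exists x. split; [exact Hx|reflexivity]. Qed.

Lemma directed_img C0 C D g : directed mul C0 D -> (forall x, D x -> C (g x)) ->
  (forall x y, x ≼ y -> g x ≼ g y) -> directed mul C (img D g).
Proof.
  intros [_ [[d Hd] Hdir]] HC Hg. split; [|split].
  - intros y [x [Hx ->]]. apply HC, Hx.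
  - exists (g d). apply img_in, Hd.
  - intros y1 y2 [x1 [H1 ->]] [x2 [H2 ->]].
    destruct (Hdir x1 x2 H1 H2) as [z [Hz [L1 L2]]].
    exists (g z). split; [apply img_in, Hz|split; apply Hg; assumption].
Qed.

Lemma directed_allS C D : directed mul C D -> directed mul allS D.
Proof. intros [_ HD]. split; [intros; exact I|exact HD]. Qed.

Lemma way_below_ileq C x y : way_below mul C x y -> C y -> x ≼ y.
Proof.
  intros Hw Hy.
  assert (Hdir : directed mul C (fun z => z = y)).
  { split; [|split].
    - intros d ->. exact Hy.
    - exists y. reflexivity.
    - intros a b -> ->. exists y. split; [reflexivity|split; apply ileq_refl]. }
  assert (Hsup : is_sup mul C (fun z => z = y) y).
  { split; [exact Hy|split].
    - intros d ->. apply ileq_refl.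
    - intros u _ Hu. apply Hu. reflexivity. }
  destruct (Hw _ y Hdir Hsup (ileq_refl y)) as [d [-> Hd]]. exact Hd.
Qed.

Lemma way_below_mono C x y y' : way_below mul C x y -> y ≼ y' -> way_below mul C x y'.
Proof.
  intros Hw Hle D s HD Hs Hy. apply (Hw D s HD Hs). apply ileq_trans with y'; assumption.
Qed.

(* An upper bound f of the domains need not be idempotent; still a ≤ a f
   gives e = e f e for e = d(a), which forces e ≤ f. *)
Lemma is_sup_dom D a : is_sup mul allS D a -> is_sup mul allS (img D (fun d => dom d)) (dom a).
Proof.
  intros [_ [Hub Hl]]. split; [exact I|split].
  - intros y [d [Hd ->]]. apply ileq_dom, Hub, Hd.
  - intros f _ Hf.
    assert (Ha : a ≼ a ∙ f).
    { apply Hl; [exact I|]. intros d Hd.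
      assert (E1 : d = a ∙ dom d) by (apply ileq_domE, Hub, Hd).
      assert (E2 : dom d = f ∙ dom d) by (apply idem_ileqE; [apply idem_dom|apply Hf, (img_in D (fun x => dom x)), Hd]).
      exists (dom d). split; [apply idem_dom|].
      rewrite E1 at 1. rewrite E2 at 1. reassoc. reflexivity. }
    apply ileq_domE in Ha.
    set (e := dom a) in *.
    assert (He : Sigma e) by apply idem_dom.
    assert (E : e = e ∙ f ∙ e).
    { transitivity (star a ∙ (a ∙ f ∙ e)); [rewrite <- Ha; reflexivity|unfold e; reassoc; reflexivity]. }
    assert (Ief : Sigma (e ∙ f)) by (unfold idem; rewrite mulA, <- E; reflexivity).
    assert (Ife : Sigma (f ∙ e)).
    { unfold idem. transitivity (f ∙ (e ∙ f ∙ e)); [reassoc; reflexivity|rewrite <- E; reflexivity]. }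
    assert (E3 : e ∙ f = e).
    { transitivity (e ∙ (e ∙ f)); [rewrite mulA, He; reflexivity|].
      rewrite (idem_comm _ _ He Ief). symmetry. exact E. }
    apply idem_ileqE; [exact He|].
    transitivity (e ∙ (f ∙ e)); [rewrite mulA, E3, He; reflexivity|].
    rewrite (idem_comm _ _ He Ife), <- mulA, He. reflexivity.
Qed.

Lemma way_below_of_dom t s : t ≼ s -> way_below mul Sigma (dom t) (dom s) ->
  way_below mul allS t s.
Proof.
  intros Hts Hw D a HD Ha Hsa.
  destruct (is_sup_dom D a Ha) as [_ [Hub Hl]].
  assert (HDdom : directed mul Sigma (img D (fun d => dom d))).
  { apply (directed_img allS); [exact HD|intros; apply idem_dom|intros; apply ileq_dom; assumption]. }
  assert (Hadom : is_sup mul Sigma (img D (fun d => dom d)) (dom a)).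
  { split; [apply idem_dom|split; [exact Hub|intros u _ Hu; apply Hl; [exact I|exact Hu]]]. }
  destruct (Hw _ _ HDdom Hadom (ileq_dom _ _ Hsa)) as [y [[d [Hd ->]] Hy]].
  exists d. split; [exact Hd|].
  apply ileq_of_dom with a; [apply ileq_trans with s; assumption|apply (proj2 Ha), Hd|exact Hy].
Qed.

Lemma way_below_idem_allS e f : Sigma e -> Sigma f -> way_below mul Sigma e f ->
  way_below mul allS e f.
Proof.
  intros He Hf Hw. apply way_below_of_dom; [apply (way_below_ileq _ _ _ Hw Hf)|].
  rewrite !dom_idem by assumption. exact Hw.
Qed.

Section Mirror.
Hypothesis Hmirror : mirror mul.

Lemma is_sup_idem_allS D u : directed mul Sigma D -> is_sup mul Sigma D u ->
  is_sup mul allS D u.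
Proof.
  intros HD Hu. destruct (Hmirror D HD (ex_intro _ u Hu)) as [w [_ [Hwub Hwl]]].
  assert (Hwu : w ≼ u) by (apply Hwl; [exact I|apply (proj2 Hu)]).
  assert (Iw : Sigma w) by (apply idem_ileq with u; [apply (proj1 Hu)|exact Hwu]).
  assert (Huw : u ≼ w) by (apply (proj2 (proj2 Hu)); [exact Iw|exact Hwub]).
  split; [exact I|split; [apply (proj2 Hu)|]].
  intros v _ Hv. apply ileq_trans with w; [exact Huw|apply Hwl; [exact I|exact Hv]].
Qed.

Lemma way_below_allS_idem e f : way_below mul allS e f -> way_below mul Sigma e f.
Proof.
  intros Hw D s HD Hs Hfs.
  exact (Hw D s (directed_allS _ _ HD) (is_sup_idem_allS D s HD Hs) Hfs).
Qed.

Lemma stably_continuous_idem : stably_continuous mul allS -> stably_continuous mul Sigma.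
Proof.
  intros [Hc Hmul]. split.
  - intros e He. destruct (Hc e I) as [[_ [[t0 Ht0] Hdir]] [_ [Hub Hl]]].
    assert (ToSigma : forall t, allS t /\ way_below mul allS t e ->
                      Sigma t /\ way_below mul Sigma t e).
    { intros t [_ Ht]. split; [|apply way_below_allS_idem, Ht].
      apply idem_ileq with e; [exact He|apply (way_below_ileq _ _ _ Ht I)]. }
    assert (ToS : forall t, Sigma t /\ way_below mul Sigma t e ->
                  allS t /\ way_below mul allS t e).
    { intros t [It Ht]. split; [exact I|apply way_below_idem_allS; assumption]. }
    split; [split; [|split]|split; [exact He|split]].
    + intros d Hd. apply Hd.
    + exists t0. apply ToSigma, Ht0.
    + intros x y Hx Hy. destruct (Hdir x y (ToS x Hx) (ToS y Hy)) as [z [Hz Hxyz]].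
      exists z. split; [apply ToSigma, Hz|exact Hxyz].
    + intros d Hd. apply Hub, ToS, Hd.
    + intros u Iu Hu. apply Hl; [exact I|]. intros d Hd. apply Hu, ToSigma, Hd.
  - intros s t s' t' Is It Is' It' W W'.
    apply way_below_allS_idem.
    apply Hmul; try exact I; apply way_below_idem_allS; assumption.
Qed.

Section StablyContinuousSigma.
Hypothesis HSigma : stably_continuous mul Sigma.

(* e u is the supremum of its approximants x ≪ e u in Σ, and each of them
   lies below some e d. *)
Lemma is_sup_mul_idem D u e : directed mul Sigma D -> is_sup mul Sigma D u -> Sigma e ->
  is_sup mul allS (img D (fun d => e ∙ d)) (e ∙ u).
Proof.
  intros HD Hu He. pose proof (proj1 Hu) as Iu.
  split; [exact I|split].
  - intros y [d [Hd ->]]. apply ileq_mull, (proj2 Hu), Hd.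
  - intros v _ Hv.
    assert (Ieu : Sigma (e ∙ u)) by (apply idem_mul; assumption).
    destruct (proj1 HSigma (e ∙ u) Ieu) as [Happrox Hsup].
    apply (proj2 (proj2 (is_sup_idem_allS _ _ Happrox Hsup))); [exact I|].
    intros x [Ix Hx].
    assert (Hxe : x ≼ e).
    { apply ileq_trans with (e ∙ u); [apply (way_below_ileq _ _ _ Hx Ieu)|].
      apply ileq_mul_idem, Iu. }
    destruct (way_below_mono _ _ _ _ Hx (idem_mul_ileq_r _ _ He Iu) D u HD Hu (ileq_refl u))
      as [d [Hd Hxd]].
    apply ileq_trans with (e ∙ d); [|apply Hv, (img_in D (fun x => e ∙ x)), Hd].
    apply idem_ileqE in Hxe; [|exact Ix]. apply idem_ileqE in Hxd; [|exact Ix].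
    apply idem_ileqE; [exact Ix|]. rewrite <- mulA, <- Hxd. exact Hxe.
Qed.

Lemma is_sup_mul D u s : directed mul Sigma D -> is_sup mul Sigma D u ->
  is_sup mul allS (img D (fun d => s ∙ d)) (s ∙ u).
Proof.
  intros HD Hu. split; [exact I|split].
  - intros y [d [Hd ->]]. apply ileq_mull, (proj2 Hu), Hd.
  - intros v _ Hv.
    destruct (is_sup_mul_idem D u (dom s) HD Hu (idem_dom s)) as [_ [_ Hl]].
    assert (H1 : dom s ∙ u ≼ star s ∙ v).
    { apply Hl; [exact I|]. intros y [d [Hd ->]]. rewrite <- mulA.
      apply ileq_mull, Hv, (img_in D (fun x => s ∙ x)), Hd. }
    apply (ileq_mull s) in H1. rewrite !mulA, ran_mul in H1.
    apply ileq_trans with (ran s ∙ v); [exact H1|apply idem_mul_ileq, idem_ran].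
Qed.

Lemma way_below_dom t s : way_below mul allS t s -> way_below mul Sigma (dom t) (dom s).
Proof.
  intros Ht D u HD Hu Hle.
  assert (HsD : directed mul allS (img D (fun d => s ∙ d))).
  { apply (directed_img Sigma); [exact HD|intros; exact I|intros a b Hab; apply ileq_mull, Hab]. }
  assert (Hsu : s ≼ s ∙ u).
  { apply idem_ileqE in Hle; [|apply idem_dom]. exists (dom s). split; [apply idem_dom|].
    rewrite <- mulA, <- Hle, mulA, ran_mul. reflexivity. }
  destruct (Ht _ _ HsD (is_sup_mul D u s HD Hu) Hsu) as [z [[d [Hd ->]] Htz]].
  exists d. split; [exact Hd|].
  apply ileq_trans with (dom (s ∙ d)); [apply ileq_dom, Htz|].
  rewrite dom_mul, star_idem by apply (proj1 HD d Hd).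
  rewrite <- mulA. apply ileq_mul_idem, idem_mul; [apply idem_dom|apply (proj1 HD d Hd)].
Qed.

Lemma way_below_allS_iff t s :
  way_below mul allS t s <-> t ≼ s /\ way_below mul Sigma (dom t) (dom s).
Proof.
  split.
  - intro Ht. split; [apply (way_below_ileq _ _ _ Ht I)|apply way_below_dom, Ht].
  - intros [Hts Hw]. apply way_below_of_dom; assumption.
Qed.

Lemma conj_star_conj r d : Sigma d -> star r ∙ (r ∙ d ∙ star r) ∙ r = dom r ∙ d.
Proof.
  intro Hd. transitivity (dom r ∙ d ∙ dom r); [reassoc; reflexivity|].
  rewrite (mul_idem_comm _ _ _ Hd (idem_dom r)), (idem_dom r). reflexivity.
Qed.

Lemma conj_conj_star r y : Sigma y -> y ≼ ran r -> r ∙ (star r ∙ y ∙ r) ∙ star r = y.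
Proof.
  intros Iy Hyr. apply idem_ileqE in Hyr; [|exact Iy].
  transitivity (ran r ∙ y ∙ ran r); [reassoc; reflexivity|].
  rewrite (mul_idem_comm _ _ _ Iy (idem_ran r)), (idem_ran r). symmetry. exact Hyr.
Qed.

Lemma is_sup_conj D u r : directed mul Sigma D -> is_sup mul Sigma D u ->
  is_sup mul Sigma (img D (fun d => r ∙ d ∙ star r)) (r ∙ u ∙ star r).
Proof.
  intros HD Hu. split; [apply idem_conj_star, (proj1 Hu)|split].
  - intros z [d [Hd ->]]. apply ileq_conj, (proj2 Hu), Hd.
  - intros w Iw Hw.
    destruct (is_sup_mul_idem D u (dom r) HD Hu (idem_dom r)) as [_ [_ Hl]].
    assert (Hdom : dom r ∙ u ≼ star r ∙ w ∙ r).
    { apply Hl; [exact I|]. intros z [d [Hd ->]].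
      rewrite <- (conj_star_conj r d) by apply (proj1 HD), Hd.
      apply ileq_mulr, ileq_mull, Hw, (img_in D (fun x => r ∙ x ∙ star r)), Hd. }
    apply (ileq_conj r) in Hdom.
    replace (r ∙ (dom r ∙ u) ∙ star r) with (r ∙ u ∙ star r) in Hdom
      by (reassoc; rewrite ran_mul; reflexivity).
    apply ileq_trans with (r ∙ (star r ∙ w ∙ r) ∙ star r); [exact Hdom|].
    replace (r ∙ (star r ∙ w ∙ r) ∙ star r) with (ran r ∙ w ∙ ran r) by (reassoc; reflexivity).
    apply ileq_trans with (w ∙ ran r);
      [apply ileq_mulr, idem_mul_ileq, idem_ran|apply ileq_mul_idem, idem_ran].
Qed.

(* Conjugation by r is an order isomorphism from the idempotents below rr*
   onto those below r*r, and it preserves suprema of directed sets. *)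
Lemma way_below_conj r x y : Sigma x -> Sigma y -> y ≼ ran r ->
  way_below mul Sigma x y -> way_below mul Sigma (star r ∙ x ∙ r) (star r ∙ y ∙ r).
Proof.
  intros Ix Iy Hyr Hw D u HD Hu Hle.
  assert (HrD : directed mul Sigma (img D (fun d => r ∙ d ∙ star r))).
  { apply (directed_img Sigma); [exact HD|intros d Hd; apply idem_conj_star, (proj1 HD), Hd|].
    intros a b Hab. apply ileq_conj, Hab. }
  assert (Hy : y ≼ r ∙ u ∙ star r).
  { rewrite <- (conj_conj_star r y Iy Hyr). apply ileq_conj, Hle. }
  destruct (Hw _ _ HrD (is_sup_conj D u r HD Hu) Hy) as [z [[d [Hd ->]] Hxz]].
  exists d. split; [exact Hd|].
  apply ileq_trans with (star r ∙ (r ∙ d ∙ star r) ∙ r); [apply ileq_conj with (r := star r) in Hxz|].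
  - rewrite starK in Hxz. exact Hxz.
  - rewrite conj_star_conj by apply (proj1 HD), Hd. apply idem_mul_ileq, idem_dom.
Qed.

Lemma way_below_mul_approx s x : Sigma x -> way_below mul Sigma x (dom s) ->
  way_below mul allS (s ∙ x) s.
Proof.
  intros Ix Hx. apply way_below_of_dom; [apply ileq_mul_idem, Ix|].
  rewrite dom_mul_idem; [exact Hx|exact Ix|apply (way_below_ileq _ _ _ Hx (idem_dom s))].
Qed.

Lemma continuous_allS : continuous mul allS.
Proof.
  intros s _.
  destruct (proj1 HSigma (dom s) (idem_dom s)) as [Happrox Hsup].
  pose proof Happrox as [_ [[x0 Hx0] Hdir]].
  assert (Hmul : forall x, Sigma x /\ way_below mul Sigma x (dom s) ->
                 allS (s ∙ x) /\ way_below mul allS (s ∙ x) s).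
  { intros x [Ix Hx]. split; [exact I|apply way_below_mul_approx; assumption]. }
  split; [split; [|split]|split; [exact I|split]].
  - intros; exact I.
  - exists (s ∙ x0). apply Hmul, Hx0.
  - intros t1 t2 [_ H1] [_ H2].
    apply way_below_allS_iff in H1 as [L1 W1]. apply way_below_allS_iff in H2 as [L2 W2].
    destruct (Hdir (dom t1) (dom t2)) as [z [Hz [Z1 Z2]]];
      [split; [apply idem_dom|assumption]..|].
    exists (s ∙ z). split; [apply Hmul, Hz|].
    split; apply ileq_mul_of_dom; solve [apply (proj1 Hz) | assumption].
  - intros t [_ Ht]. apply (way_below_ileq _ _ _ Ht I).
  - intros v _ Hv. destruct (is_sup_mul _ _ s Happrox Hsup) as [_ [_ Hl]].
    rewrite mulA, ran_mul in Hl. apply Hl; [exact I|].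
    intros y [x [Hx ->]]. apply Hv, Hmul, Hx.
Qed.

(* Both domains are conjugates by r of products in Σ:
   d(s1 s2) = r* (e1 · r e2 r* ) r and d(t1 r) = r* (E1 · r r* ) r. *)
Lemma wb_multiplicative_allS : wb_multiplicative mul allS.
Proof.
  intros s1 t1 s2 r _ _ _ _ W1 W2.
  apply way_below_allS_iff in W1 as [L1 V1]. apply way_below_allS_iff in W2 as [L2 V2].
  apply way_below_of_dom; [apply ileq_mul; assumption|].
  assert (Ie1 := idem_dom s1). assert (Ie2 := idem_dom s2).
  assert (IE1 := idem_dom t1). assert (IE2 := idem_dom r).
  set (e1 := dom s1) in *. set (e2 := dom s2) in *.
  set (E1 := dom t1) in *. set (E2 := dom r) in *.
  assert (C1 : way_below mul Sigma (r ∙ e2 ∙ star r) (ran r)).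
  { pose proof (way_below_conj (star r) e2 E2 Ie2 IE2) as P. rewrite starK in P.
    replace (ran r) with (r ∙ E2 ∙ star r) by (unfold E2; reassoc; rewrite ran_mul; reflexivity).
    apply P; [apply ileq_refl|exact V2]. }
  assert (C2 : way_below mul Sigma (e1 ∙ (r ∙ e2 ∙ star r)) (E1 ∙ ran r))
    by (apply (proj2 HSigma); auto using idem_conj_star, idem_ran).
  pose proof (way_below_conj r _ _ (idem_mul _ _ Ie1 (idem_conj_star r e2 Ie2))
                (idem_mul _ _ IE1 (idem_ran r)) (idem_mul_ileq_r _ _ IE1 (idem_ran r)) C2) as C3.
  replace (star r ∙ (E1 ∙ ran r) ∙ r) with (dom (t1 ∙ r)) in C3
    by (rewrite dom_mul; unfold E1; reassoc; rewrite mul_ran_mul; reflexivity).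
  replace (star r ∙ (e1 ∙ (r ∙ e2 ∙ star r)) ∙ r) with (dom (s1 ∙ s2)) in C3; [exact C3|].
  assert (Hs2 : s2 = r ∙ e2) by (apply ileq_domE, L2).
  assert (He2 : e2 = e2 ∙ E2).
  { rewrite (idem_comm _ _ Ie2 IE2). apply idem_ileqE; [exact Ie2|].
    apply (way_below_ileq _ _ _ V2 IE2). }
  assert (Ic : Sigma (star r ∙ e1 ∙ r)) by apply (idem_conj _ _ Ie1).
  rewrite dom_mul. fold e1. rewrite Hs2 at 1 2. rewrite star_mul, star_idem by exact Ie2.
  transitivity (e2 ∙ (star r ∙ e1 ∙ r) ∙ e2); [reassoc; reflexivity|].
  transitivity (star r ∙ e1 ∙ r ∙ (e2 ∙ E2)); [|unfold E2; reassoc; reflexivity].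
  rewrite <- He2.
  rewrite (idem_comm _ _ Ie2 Ic), mul_idem_idem by exact Ie2. reflexivity.
Qed.

End StablyContinuousSigma.
End Mirror.

End InverseSemigroup.

Theorem corollary5p4 (S : Type) (mul : S -> S -> S) :
  inverse_semigroup mul -> mirror mul ->
  (stably_continuous mul (@allS S) <-> stably_continuous mul (idem mul)).
Proof.
  intros HS Hmirror. split.
  - apply (stably_continuous_idem mul HS Hmirror).
  - intro HSigma. split.
    + apply (continuous_allS mul HS Hmirror HSigma).
    + apply (wb_multiplicative_allS mul HS Hmirror HSigma).
Qed.
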